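(* Let $A\in\mathbb{R}^{n\times n}$ be nonsingular. Let $A=U-V$ be a convergent regular splitting and let $U=F-G$ be a convergent weak regular splitting of type II such that $VF^{-1}G=GF^{-1}V$. Then the stationary two-stage iterative method is convergent for any initial vector $x_0$; that is, for every positive integer $s$, the matrix $$T_{s}=(F^{-1}G)^{s}+\sum_{j=0}^{s-1}(F^{-1}G)^{j}F^{-1}V$$ satisfies $\rho(T_s)<1$, so that the iterates $x_{k+1}=T_s x_k + \sum_{j=0}^{s-1}(F^{-1}G)^jF^{-1}b$ converge to $A^{-1}b$ for every $x_0$ and every $b$.
   Context: Inequalities between matrices are entrywise. A splitting $A=U-V$ with $U$ nonsingular is regular if $U^{-1}\geq 0$ and $V\geq 0$; it is weak regular of type II if $U^{-1}\geq 0$ and $VU^{-1}\geq 0$. A splitting is convergent if $\rho(U^{-1}V)<1$, where $\rho$ denotes spectral radius. The stationary two-stage method for $Ax=b$ uses outer splitting $A=U-V$ and inner splitting $U=F-G$ with a fixed number $s\ge1$ of inner iterations. *)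

From HB Require Import structures.
From mathcomp Require Import all_boot all_order all_algebra.
From mathcomp Require Import complex.
From mathcomp Require Import all_classical all_reals all_analysis.
Set Implicit Arguments. Unset Strict Implicit. Unset Printing Implicit Defensive.
Import Order.TTheory GRing.Theory Num.Theory.
Local Open Scope ring_scope.

Definition mx_nonneg (R : realType) (m n : nat) (M : 'M[R]_(m, n)) : Prop :=
  forall i j, 0 <= M i j.

Definition eigenvalues (R : realType) (n : nat) (M : 'M[R]_n) : seq R[i] :=
  sval (closed_field_poly_normal
          (char_poly (map_mx (fun x : R => (x%:C)%C) M))).

Definition spectral_radius (R : realType) (n : nat) (M : 'M[R]_n) : R :=
  \big[Num.max/0]_(z <- eigenvalues M) ComplexField.Normc.normc z.

Definition regular_splitting (R : realType) (n : nat) (A U V : 'M[R]_n) : Prop :=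
  [/\ A = U - V, U \in unitmx, mx_nonneg (invmx U) & mx_nonneg V].

Definition weak_regular_splitting_II (R : realType) (n : nat) (A U V : 'M[R]_n) : Prop :=
  [/\ A = U - V, U \in unitmx, mx_nonneg (invmx U) & mx_nonneg (V *m invmx U)].

Definition convergent_splitting (R : realType) (n : nat) (U V : 'M[R]_n) : Prop :=
  spectral_radius (invmx U *m V) < 1.

Definition two_stage_T (R : realType) (n : nat) (V F G : 'M[R]_n) (s : nat) : 'M[R]_n :=
  (invmx F *m G) ^+ s + \sum_(j < s) ((invmx F *m G) ^+ j *m invmx F *m V).

Definition two_stage_c (R : realType) (n : nat) (F G : 'M[R]_n) (s : nat)
    (b : 'cV[R]_n) : 'cV[R]_n :=
  \sum_(j < s) ((invmx F *m G) ^+ j *m invmx F *m b).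

Fixpoint two_stage_iter (R : realType) (n : nat) (V F G : 'M[R]_n) (s : nat)
    (b x0 : 'cV[R]_n) (k : nat) : 'cV[R]_n :=
  match k with
  | 0 => x0
  | k'.+1 => two_stage_T V F G s *m two_stage_iter V F G s b x0 k'
             + two_stage_c F G s b
  end.

From HB Require Import structures.
From mathcomp Require Import all_boot all_order all_algebra.
From mathcomp Require Import complex.
From mathcomp Require Import all_classical all_reals all_analysis.
From mathcomp Require Import lra.
Import Order.TTheory GRing.Theory Num.Theory.
Import numFieldNormedType.Exports.
Local Open Scope classical_set_scope.
Local Open Scope ring_scope.

(* Put K = G F^-1 >= 0 and W = V F^-1 >= 0.  Conjugating by F turns
   T_s into K^s + \sum_(j < s) K^j W, and since I - K = U F^-1, the splitting
   (I - K) - W of A F^-1 is regular with iteration matrix similar to U^-1 V, hence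
   convergent.  A convergent regular splitting has a nonnegative inverse, so
   x = (I - K - W)^-1 1 satisfies x = 1 + (K + W) x >= 1, and telescoping gives
   (K^s + \sum_j K^j W) x = x - \sum_j K^j 1 < x.  A nonnegative matrix mapping a
   positive vector strictly below itself has spectral radius < 1.  Finally, spectral
   radius < 1 makes the powers tend to 0 (factor the characteristic polynomial over
   C and apply Cayley-Hamilton), which gives both the Neumann-series facts used
   above and the convergence of the iterates to their fixed point A^-1 b. *)

Lemma eigenvalue_trmx (F : fieldType) n (g : 'M[F]_n) a :
  eigenvalue g^T a = eigenvalue g a.
Proof.
by rewrite /eigenvalue /eigenspace !kermx_eq0 !row_free_unit -unitmx_tr
  linearB /= trmxK tr_scalar_mx.
Qed.

Lemma char_poly_conj (F : fieldType) n (P M : 'M[F]_n) : P \in unitmx ->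
  char_poly (P *m M *m invmx P) = char_poly M.
Proof.
move=> uP; pose Pp := map_mx polyC P.
have uPp : Pp \in unitmx by rewrite map_unitmx.
rewrite /char_poly.
have -> : char_poly_mx (P *m M *m invmx P) = Pp *m char_poly_mx M *m invmx Pp.
  by rewrite /char_poly_mx !map_mxM map_invmx mulmxBr mulmxBl scalar_mxC mulmxK.
by rewrite !det_mulmx det_inv mulrC mulrA mulVr ?mul1r.
Qed.

Lemma map_mxX (aR rR : pzRingType) (f : {rmorphism aR -> rR}) n (M : 'M[aR]_n) k :
  map_mx f (M ^+ k) = map_mx f M ^+ k.
Proof.
elim: k => [|k IHk]; first by rewrite !expr0 -idmxE map_mx1.
by rewrite !exprS -!mulmxE map_mxM IHk.
Qed.

Lemma invmxM {T : comUnitRingType} {n} {A B : 'M[T]_n} :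
  A \in unitmx -> B \in unitmx -> invmx (A *m B) = invmx B *m invmx A.
Proof.
move=> uA uB; have uAB : A *m B \in unitmx by rewrite unitmx_mul uA.
have AB_inv : A *m B *m (invmx B *m invmx A) = 1%:M.
  by rewrite mulmxA mulmxK // mulmxV.
by rewrite -[LHS]mulmx1 -AB_inv mulKmx.
Qed.

Lemma exp_conjmx (F : comUnitRingType) n (P M : 'M[F]_n) k : P \in unitmx ->
  (P *m M *m invmx P) ^+ k = P *m M ^+ k *m invmx P.
Proof.
move=> uP; elim: k => [|k IHk]; first by rewrite !expr0 -idmxE mulmx1 mulmxV.
by rewrite !exprS IHk -!mulmxE !mulmxA mulmxKV.
Qed.

Lemma geometric_sum_mulmx (F : pzRingType) n (K : 'M[F]_n) s :
  (\sum_(j < s) K ^+ j) *m (1%:M - K) = 1%:M - K ^+ s.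
Proof.
rewrite idmxE mulmxE -[RHS]opprB subrX1 -mulNr opprB.
apply/commr_sym/commr_sum => j _; apply: commrX.
by apply/commr_sym/commrB; [exact: commr1 | exact: commr_refl].
Qed.

Lemma cvg0_contraction {R : realType} (a b : R ^nat) (q : R) : 0 <= q -> q < 1 ->
  (forall k, 0 <= a k) -> b @ \oo --> 0 ->
  (forall k, a k.+1 <= q * a k + b k) -> a @ \oo --> 0.
Proof.
move=> q_ge0 q_lt1 a_ge0 b0 ab; apply/cvgr0Pnorm_lt => e e_gt0.
have e2_gt0 : 0 < e / 2 by rewrite divr_gt0.
have d_gt0 : 0 < e * (1 - q) / 2 by rewrite divr_gt0 // mulr_gt0 // subr_gt0.
have [N _ bN] := cvgr0_norm_lt _ b0 _ d_gt0.
have aN m : a (N + m)%N <= q ^+ m * a N + e / 2.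
  elim: m => [|m IH]; first by rewrite addn0 expr0 mul1r lerDl (ltW e2_gt0).
  rewrite addnS; apply: le_trans (ab _) _.
  have /ltW bNm : `|b (N + m)%N| < e * (1 - q) / 2 by apply: bN; exact: leq_addr.
  have := ler_wpM2l q_ge0 IH; rewrite exprS -mulrA.
  move: (ler_norm (b (N + m)%N)) bNm; set x := q ^+ m * a N; nra.
have qaN : (fun m => a N * q ^+ m) @ \oo --> 0.
  by rewrite -(mulr0 (a N)); apply: cvgMl_tmp; apply: cvg_expr; rewrite ger0_norm.
have [M _ qM] := cvgr0_norm_lt _ qaN _ e2_gt0.
exists (N + M)%N => // k /= le_k.
have le_Nk : (N <= k)%N := leq_trans (leq_addr M N) le_k.
have le_Mk : (M <= k - N)%N by rewrite leq_subRL.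
rewrite -(subnKC le_Nk) ger0_norm //; apply: le_lt_trans (aN _) _.
move: (qM _ le_Mk) (ler_norm (a N * q ^+ (k - N))) => /=; lra.
Qed.

Section Spectrum.
Context {R : realType}.
Local Notation normc := (@ComplexField.Normc.normc R).
(* Complexification; not the complement [A^C] of mxalgebra. *)
Local Notation "A ^C" := (map_mx (fun x : R => x%:C%C) A) : ring_scope.

(* [normc] is the norm of the normed Z-module structure on [Rcomplex R]. *)
Lemma normc_ge0 (z : R[i]) : 0 <= normc z.
Proof. exact: (@normr_ge0 R (Rcomplex R)). Qed.

Lemma normc_gt0 (z : R[i]) : (0 < normc z) = (z != 0).
Proof. exact: (@normr_gt0 R (Rcomplex R)). Qed.

Lemma normc_real (x : R) : normc x%:C%C = `|x|.
Proof. by rewrite /= expr0n /= addr0 sqrtr_sqr. Qed.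

Lemma normc_sum_le (I : Type) (r : seq I) (f : I -> R[i]) :
  normc (\sum_(i <- r) f i) <= \sum_(i <- r) normc (f i).
Proof. exact: (@ler_norm_sum R (Rcomplex R)). Qed.

Lemma mem_eigenvalues {n} (M : 'M[R]_n) z :
  (z \in eigenvalues M) = root (char_poly M^C) z.
Proof.
rewrite /eigenvalues; case: closed_field_poly_normal => rs /= ->.
by rewrite rootZ ?root_prod_XsubC // (monicP (char_poly_monic _)) oner_eq0.
Qed.

Lemma eigenvalues_eigenvector {n} (M : 'M[R]_n) z : z \in eigenvalues M ->
  exists2 v : 'cV_n, M^C *m v = z *: v & v != 0.
Proof.
rewrite mem_eigenvalues -eigenvalue_root_char -eigenvalue_trmx.
case/eigenvalueP => v vM v_neq0.
exists v^T; last by rewrite trmx_eq0.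
by apply: trmx_inj; rewrite trmx_mul trmxK vM linearZ /= trmxK.
Qed.

Lemma eigenvalues_conj {n} (P M : 'M[R]_n) : P \in unitmx ->
  eigenvalues (P *m M *m invmx P) = eigenvalues M.
Proof.
by move=> uP; rewrite /eigenvalues !map_mxM map_invmx char_poly_conj ?map_unitmx.
Qed.

Lemma spectral_radius_conj {n} (P M : 'M[R]_n) : P \in unitmx ->
  spectral_radius (P *m M *m invmx P) = spectral_radius M.
Proof. by move=> uP; rewrite /spectral_radius eigenvalues_conj. Qed.

Lemma normc_le_spectral_radius {n} (M : 'M[R]_n) z :
  z \in eigenvalues M -> normc z <= spectral_radius M.
Proof. by move=> zM; rewrite /spectral_radius le_bigmax_seq. Qed.

Lemma spectral_radius_le {n} (M : 'M[R]_n) t : 0 <= t ->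
  (forall z, z \in eigenvalues M -> normc z <= t) -> spectral_radius M <= t.
Proof. by move=> t_ge0 Mt; rewrite /spectral_radius big_seq; exact: bigmax_le. Qed.

Lemma spectral_radius_le_subinvariant {n} (P : 'M[R]_n) (x : 'cV[R]_n) t :
  mx_nonneg P -> (forall i, 0 < x i 0) -> 0 <= t ->
  (forall i, (P *m x) i 0 <= t * x i 0) -> spectral_radius P <= t.
Proof.
move=> P_ge0 x_gt0 t_ge0 Px_le; apply: spectral_radius_le => // z.
case/eigenvalues_eigenvector => u Pu /cV0Pn[j uj_neq0].
(* Compare the eigenvector u with x at an index maximizing |u_i| / x_i. *)
pose r i := normc (u i 0) / x i 0.
have [i0 _ r_le] := @arg_maxP _ _ _ j xpredT r isT.
have u_le k : normc (u k 0) <= r i0 * x k 0 by rewrite -ler_pdivrMr //; exact: r_le.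
have ui0 : normc (u i0 0) = r i0 * x i0 0 by rewrite /r mulfVK // gt_eqF.
have ri0_gt0 : 0 < r i0.
  by apply: lt_le_trans (r_le j isT); rewrite divr_gt0 // normc_gt0.
have ui0_gt0 : 0 < normc (u i0 0) by rewrite ui0 mulr_gt0.
suff : normc z * normc (u i0 0) <= t * normc (u i0 0) by rewrite ler_pM2r.
rewrite -ComplexField.Normc.normcM.
have -> : z * u i0 0 = \sum_k (P i0 k)%:C%C * u k 0.
  have := congr1 (fun v : 'cV_n => v i0 0) Pu; rewrite !mxE => <-.
  by apply: eq_bigr => k _; rewrite mxE.
apply: le_trans (normc_sum_le _ _ _) _.
apply: (@le_trans _ _ (r i0 * (P *m x) i0 0)).
  rewrite mxE big_distrr /=; apply: ler_sum => k _.
  by rewrite ComplexField.Normc.normcM normc_real ger0_norm // mulrCA ler_wpM2l.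
by rewrite ui0 mulrCA ler_wpM2l // ltW.
Qed.

Lemma spectral_radius_lt1_subinvariant {n} (P : 'M[R]_n) (x : 'cV[R]_n) :
  mx_nonneg P -> (forall i, 0 < x i 0) -> (forall i, (P *m x) i 0 < x i 0) ->
  spectral_radius P < 1.
Proof.
move=> P_ge0 x_gt0 Px_lt; pose t := \big[Num.max/0]_i ((P *m x) i 0 / x i 0).
apply: (@le_lt_trans _ _ t); last by rewrite bigmax_lt // => i _; rewrite ltr_pdivrMr ?mul1r.
apply: (@spectral_radius_le_subinvariant _ _ x) => //; first exact: bigmax_ge_id.
by move=> i; rewrite -ler_pdivrMr //; exact: le_bigmax.
Qed.

Lemma prod_eigenvalues_eq0 {n} (M : 'M[R]_n) :
  \prod_(z <- eigenvalues M) (M^C - z%:M) = 0.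
Proof.
case: n M => [|n] M; first by rewrite flatmx0.
have := Cayley_Hamilton M^C; rewrite /eigenvalues.
case: closed_field_poly_normal => rs /= ->.
rewrite (monicP (char_poly_monic _)) scale1r rmorph_prod => <-.
by apply: eq_bigr => z _; rewrite rmorphB /= horner_mx_X horner_mx_C.
Qed.

Lemma normc_cvg0_recurrence (u : nat -> R[i]) z : normc z < 1 ->
  (fun k => normc (u k.+1 - z * u k)) @ \oo --> 0 ->
  (fun k => normc (u k)) @ \oo --> 0.
Proof.
move=> z_lt1 diff0.
apply: (cvg0_contraction _ _ _ (normc_ge0 z) z_lt1 (fun k => normc_ge0 _) diff0) => k.
rewrite -ComplexField.Normc.normcM addrC -{1}[u k.+1](subrK (z * u k)).
exact: le_normcD.
Qed.

Lemma cvg0_exp_mulmx_of_annihilator {n} (X : 'M[R[i]]_n) (l : seq R[i]) :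
  (forall z, z \in l -> normc z < 1) ->
  (forall (w : 'cV_n) i, (fun k => normc (((\prod_(z <- l) (X - z%:M)) *m (X ^+ k *m w)) i 0))
     @ \oo --> 0) ->
  forall (w : 'cV_n) i, (fun k => normc ((X ^+ k *m w) i 0)) @ \oo --> 0.
Proof.
elim: l => [|z l IHl] l_lt1 Ql0 w i.
  by move: (Ql0 w i); rewrite big_nil; under eq_fun do rewrite mul1mx.
apply: IHl => [y y_l | {}w {}i]; first by apply: l_lt1; rewrite inE y_l orbT.
apply: (normc_cvg0_recurrence _ z); first by apply: l_lt1; rewrite inE eqxx.
set Q := \prod_(y <- l) (X - y%:M).
have XQ : X *m Q = Q *m X.
  by apply: commr_prod => y _; apply: commrB => //; exact: scalar_mxC.
have E k : (Q *m (X ^+ k.+1 *m w)) i 0 - z * (Q *m (X ^+ k *m w)) i 0 =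
    ((\prod_(y <- z :: l) (X - y%:M)) *m (X ^+ k *m w)) i 0.
  by rewrite big_cons exprS -!mulmxE !mulmxBl mul_scalar_mx XQ -/Q -!mulmxA -scalemxAl !mxE.
by under eq_fun do rewrite E; exact: Ql0.
Qed.

Lemma cvg0_exp_mulmx {n} (M : 'M[R]_n) (w : 'cV[R]_n) i :
  spectral_radius M < 1 -> (fun k => (M ^+ k *m w) i 0) @ \oo --> 0.
Proof.
move=> rho_lt1; apply/norm_cvg0P.
have E k : `|(M ^+ k *m w) i 0| = normc ((M^C ^+ k *m w^C) i 0).
  by rewrite -map_mxX -map_mxM [in RHS]mxE normc_real.
under eq_fun do rewrite E.
apply: (@cvg0_exp_mulmx_of_annihilator _ _ (eigenvalues M)).
  by move=> z /normc_le_spectral_radius /le_lt_trans; apply.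
move=> v j; rewrite prod_eigenvalues_eq0.
by under eq_fun do rewrite mul0mx mxE ComplexField.Normc.normc0; exact: cvg_cst.
Qed.

End Spectrum.

Section Nonnegative.
Context {R : realType}.

Lemma mx_nonnegM {m n p} {A : 'M[R]_(m, n)} {B : 'M[R]_(n, p)} :
  mx_nonneg A -> mx_nonneg B -> mx_nonneg (A *m B).
Proof. by move=> A_ge0 B_ge0 i j; rewrite mxE sumr_ge0 // => k _; rewrite mulr_ge0. Qed.

Lemma mx_nonnegD {m n} {A B : 'M[R]_(m, n)} :
  mx_nonneg A -> mx_nonneg B -> mx_nonneg (A + B).
Proof. by move=> A_ge0 B_ge0 i j; rewrite mxE addr_ge0. Qed.

Lemma mx_nonneg_sum {m n} {I : Type} {r : seq I} {P : pred I} {A : I -> 'M[R]_(m, n)} :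
  (forall j, P j -> mx_nonneg (A j)) -> mx_nonneg (\sum_(j <- r | P j) A j).
Proof. by move=> A_ge0 i k; rewrite summxE sumr_ge0 // => j Pj; exact: A_ge0. Qed.

Lemma mx_nonnegX {n} {A : 'M[R]_n} k : mx_nonneg A -> mx_nonneg (A ^+ k).
Proof.
move=> A_ge0; elim: k => [|k IHk]; first by move=> i j; rewrite expr0 mxE ler0n.
by rewrite exprS; exact: mx_nonnegM.
Qed.

Lemma mx_nonneg_mulmx_le {m n} {A : 'M[R]_(m, n)} {a b : 'cV[R]_n} : mx_nonneg A ->
  (forall i, a i 0 <= b i 0) -> forall i, (A *m a) i 0 <= (A *m b) i 0.
Proof. by move=> A_ge0 ab i; rewrite !mxE ler_sum // => k _; rewrite ler_wpM2l. Qed.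

Lemma neumann_inv_nonneg {n} {B : 'M[R]_n} : mx_nonneg B -> spectral_radius B < 1 ->
  (1%:M - B) \in unitmx /\ mx_nonneg (invmx (1%:M - B)).
Proof.
move=> B_ge0 rho_lt1.
have uIB : (1%:M - B) \in unitmx.
  apply: contraLR rho_lt1; rewrite unitmxE unitfE negbK -leNgt => /det0P[v v_neq0 vIB].
  move/eqP: vIB; rewrite mulmxBr mulmx1 subr_eq0 => /eqP vB.
  have : eigenvalue B 1 by apply/eigenvalueP; exists v; rewrite // scale1r -vB.
  rewrite -(eigenvalue_map (real_complex R)) rmorph1 eigenvalue_root_char.
  by rewrite -mem_eigenvalues => /normc_le_spectral_radius; rewrite ComplexField.Normc.normc1.
split=> // i j; pose y := col j (invmx (1%:M - B)).
have -> : invmx (1%:M - B) i j = y i 0 by rewrite mxE.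
have By_le k : (B *m y) k 0 <= y k 0.
  have IBy : (1%:M - B) *m y = delta_mx j 0 by rewrite /y colE mulKVmx.
  have : 0 <= (delta_mx j 0 : 'cV[R]_n) k 0 by rewrite mxE ler0n.
  by rewrite -IBy mulmxBl mul1mx !mxE subr_ge0.
(* The negative part u of y satisfies u <= B u <= B^k u, and B^k u -> 0. *)
pose u := \col_k Num.max (- y k 0) 0.
have u_ge0 : mx_nonneg u by move=> k l; rewrite mxE le_max lexx orbT.
have u_le k : u k 0 <= (B *m u) k 0.
  rewrite [u k 0]mxE ge_max (mx_nonnegM B_ge0 u_ge0) andbT.
  apply: le_trans (_ : (B *m - y) k 0 <= _).
    by rewrite mulmxN [X in _ <= X]mxE lerN2.
  by apply: mx_nonneg_mulmx_le => // l; rewrite !mxE le_max lexx.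
have u_le_pow k l : u l 0 <= (B ^+ k *m u) l 0.
  elim: k l => [|k IHk] l; first by rewrite expr0 mul1mx.
  apply: le_trans (IHk l) _; rewrite exprSr -mulmxE -mulmxA.
  exact: mx_nonneg_mulmx_le (mx_nonnegX _ B_ge0) u_le l.
have : u i 0 <= 0.
  by apply: (cvgr_to_ge (cvg0_exp_mulmx B u i rho_lt1)); exact: nearW.
by rewrite mxE ge_max lerNl oppr0 => /andP[].
Qed.

Lemma regular_splitting_inv_nonneg {n} {A P W : 'M[R]_n} :
  regular_splitting A P W -> convergent_splitting P W ->
  A \in unitmx /\ mx_nonneg (invmx A).
Proof.
case=> -> uP P_inv_ge0 W_ge0 conv.
have [uIB IB_inv_ge0] := neumann_inv_nonneg (mx_nonnegM P_inv_ge0 W_ge0) conv.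
have -> : P - W = P *m (1%:M - invmx P *m W) by rewrite mulmxBr mulmx1 mulKVmx.
split; first by rewrite unitmx_mul uP.
by rewrite invmxM //; exact: mx_nonnegM.
Qed.

End Nonnegative.

Section TwoStage.
Context {R : realType} {n : nat}.

Lemma two_stage_fixpoint (U V F G : 'M[R]_n) s (x : 'cV[R]_n) :
  U = F - G -> F \in unitmx ->
  two_stage_T V F G s *m x + two_stage_c F G s ((U - V) *m x) = x.
Proof.
move=> UE uF; set H := invmx F *m G.
have FiU : invmx F *m U = 1%:M - H by rewrite UE mulmxBr mulVmx.
have term j : H ^+ j *m invmx F *m V *m x + H ^+ j *m invmx F *m ((U - V) *m x) =
    H ^+ j *m (1%:M - H) *m x.
  by rewrite -FiU mulmxBl mulmxBr !mulmxA addrC subrK.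
rewrite /two_stage_T /two_stage_c -/H mulmxDl mulmx_suml -addrA -big_split /=.
under eq_bigr do rewrite term.
by rewrite -!mulmx_suml geometric_sum_mulmx mulmxBl mul1mx addrC subrK.
Qed.

Lemma two_stage_T_conj (V F G : 'M[R]_n) s : F \in unitmx ->
  F *m two_stage_T V F G s *m invmx F =
    (G *m invmx F) ^+ s + \sum_(j < s) (G *m invmx F) ^+ j *m (V *m invmx F).
Proof.
move=> uF; have KE : G *m invmx F = F *m (invmx F *m G) *m invmx F by rewrite mulKVmx.
rewrite /two_stage_T mulmxDr mulmxDl mulmx_sumr mulmx_suml KE exp_conjmx //.
congr (_ + _); apply: eq_bigr => j _; rewrite exp_conjmx //.
by rewrite !mulmxA.
Qed.

Lemma two_stage_normalized_convergent (K W : 'M[R]_n) s : (0 < s)%N ->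
  mx_nonneg K -> regular_splitting (1%:M - K - W) (1%:M - K) W ->
  convergent_splitting (1%:M - K) W ->
  spectral_radius (K ^+ s + \sum_(j < s) K ^+ j *m W) < 1.
Proof.
move=> s_gt0 K_ge0 reg conv; have W_ge0 : mx_nonneg W by case: reg.
have [uA A_inv_ge0] := regular_splitting_inv_nonneg reg conv.
set S := \sum_(j < s) K ^+ j; pose e : 'cV[R]_n := const_mx 1.
have e_ge0 : mx_nonneg e by move=> i j; rewrite mxE ler01.
pose x := invmx (1%:M - K - W) *m e.
have x_ge0 : mx_nonneg x := mx_nonnegM A_inv_ge0 e_ge0.
have Ax : (1%:M - K - W) *m x = e by rewrite mulKVmx.
clearbody x.
have x_ge1 i : 1 <= x i 0.
  have : x = e + K *m x + W *m x by rewrite -Ax !mulmxBl mul1mx addrAC !subrK.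
  move/(congr1 (fun v : 'cV_n => v i 0)); rewrite 2!mxE [e i 0]mxE => ->.
  by rewrite -addrA lerDl addr_ge0 // mx_nonnegM.
have Tx : (K ^+ s + S *m W) *m x = x - S *m e.
  have Wx : W *m x = (1%:M - K) *m x - e.
    by rewrite -Ax [(1%:M - K - W) *m x]mulmxBl opprB addrC subrK.
  rewrite mulmxDl -mulmxA Wx mulmxBr mulmxA geometric_sum_mulmx mulmxBl mul1mx.
  by rewrite addrA [K ^+ s *m x + _]addrC subrK.
have Se_ge1 i : 1 <= (S *m e) i 0.
  rewrite /S (bigD1 (Ordinal s_gt0) isT) /= expr0 mulmxDl mul1mx mxE [e i 0]mxE.
  by rewrite lerDl (mx_nonnegM (mx_nonneg_sum (fun j _ => mx_nonnegX _ K_ge0)) e_ge0).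
apply: (@spectral_radius_lt1_subinvariant _ _ _ x).
- apply: mx_nonnegD; first exact: mx_nonnegX.
  by apply: mx_nonneg_sum => j _; apply: mx_nonnegM => //; exact: mx_nonnegX.
- by move=> i; apply: lt_le_trans (x_ge1 i).
- move=> i; rewrite -mulmx_suml -/S Tx 2!mxE gtrBl.
  exact: lt_le_trans ltr01 (Se_ge1 i).
Qed.

Lemma cvg_affine_iteration {T : 'M[R]_n} {c y : 'cV[R]_n} {x : nat -> 'cV[R]_n} :
  spectral_radius T < 1 -> T *m y + c = y -> (forall k, x k.+1 = T *m x k + c) ->
  forall i, (fun k => x k i 0) @ \oo --> y i 0.
Proof.
move=> rho_lt1 fix_y x_rec i.
have err k : x k = y + T ^+ k *m (x 0%N - y).
  elim: k => [|k IHk]; first by rewrite expr0 mul1mx addrC subrK.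
  by rewrite x_rec IHk mulmxDr addrAC fix_y exprS -mulmxE mulmxA.
have -> : (fun k => x k i 0) = (fun k => y i 0 + (T ^+ k *m (x 0%N - y)) i 0).
  by apply/funext => k; rewrite {1}err mxE.
have := cvgD (cvg_cst (y i 0)) (cvg0_exp_mulmx T (x 0%N - y) i rho_lt1).
by rewrite addr0; apply.
Qed.

End TwoStage.

Theorem corollary3p4 (R : realType) (n : nat) (A U V F G : 'M[R]_n) :
  A \in unitmx ->
  regular_splitting A U V -> convergent_splitting U V ->
  weak_regular_splitting_II U F G -> convergent_splitting F G ->
  V *m invmx F *m G = G *m invmx F *m V ->
  forall s : nat, (0 < s)%N ->
    spectral_radius (two_stage_T V F G s) < 1 /\
    (forall (b x0 : 'cV[R]_n) (i : 'I_n),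
       (fun k : nat => (two_stage_iter V F G s b x0 k i 0 : R)) @ \oo --> ((invmx A *m b) i 0 : R)).
Proof.
move=> uA [AE uU U_inv_ge0 V_ge0] UV_conv [UE uF F_inv_ge0 K_ge0] FG_conv _ s s_gt0.
set K := G *m invmx F; set W := V *m invmx F.
have rhoK : spectral_radius K < 1.
  by rewrite /K -{1}(mulKVmx uF G) (spectral_radius_conj F _ uF); exact: FG_conv.
have [uIK IK_inv_ge0] := neumann_inv_nonneg K_ge0 rhoK.
have reg : regular_splitting (1%:M - K - W) (1%:M - K) W.
  by split=> //; exact: mx_nonnegM.
have conv : convergent_splitting (1%:M - K) W.
  have IKE : 1%:M - K = U *m invmx F by rewrite UE mulmxBl mulmxV.
  have uFi : invmx F \in unitmx by rewrite unitmx_inv.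
  rewrite /convergent_splitting IKE (invmxM uU uFi) invmxK /W !mulmxA -(mulmxA F).
  by rewrite (spectral_radius_conj F _ uF); exact: UV_conv.
have rhoT : spectral_radius (two_stage_T V F G s) < 1.
  rewrite -(spectral_radius_conj F _ uF) (two_stage_T_conj _ _ _ _ uF).
  exact: two_stage_normalized_convergent.
split; first exact: rhoT.
move=> b x0; apply: (cvg_affine_iteration rhoT) => [|k]; last by [].
by rewrite -{2}(mulKVmx uA b) AE two_stage_fixpoint.
Qed.
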